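(* Let $r\ge1$ and $t,s\ge0$ be integers. For every $\mathbf{u}=(u_1,\dots,u_r)\in\mathbb{Z}_+^r$ with $u_i\ge s+1$ for all $i\in\{1,\dots,r\}$, we have $|\mathcal{A}_{t,s}(\mathbf{u})|=A_{t,s}(r)$.
   Context: For $\mathbf{u}\in\mathbb{Z}_+^r$ (positive integers), $\mathcal{A}_{t,s}(\mathbf{u})=\{\mathbf{v}\in\mathbb{Z}_+^r:\ \sum_{i=1}^r\max\{0,u_i-v_i\}\le s,\ \sum_{i=1}^r\max\{0,v_i-u_i\}\le t\}$. The numbers $A_{t,s}(r)$ (integers $t,s$, $r\ge1$) are defined by: $A_{t,s}(r)=0$ if $t<0$ or $s<0$; $A_{t,s}(1)=t+s+1$ for $t,s\ge0$; for $r\ge2$, $t,s\ge0$: $A_{t,s}(r)=\sum_{i=1}^{t}A_{t-i,s}(r-1)+\sum_{i=1}^{s}A_{t,s-i}(r-1)+A_{t,s}(r-1)$. *)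

From mathcomp Require Import all_boot.
Set Implicit Arguments. Unset Strict Implicit. Unset Printing Implicit Defensive.

(* Vectors in Z_+^r are r-tuples of nats with all entries >= 1. *)
Definition posvec (r : nat) (v : r.-tuple nat) : bool := all (fun x => 0 < x) v.

Definition inA (r t s : nat) (u v : r.-tuple nat) : bool :=
  [&& posvec v,
      (\sum_(i < r) (tnth u i - tnth v i)) <= s &
      (\sum_(i < r) (tnth v i - tnth u i)) <= t].

(* The numbers A_{t,s}(r) for t,s >= 0 (negative arguments never arise,
   since the recursion only uses t-i, s-i with 1 <= i <= t resp. s).
   Anum t s r is specified for r >= 1; Anum t s 0 is an unused value. *)
Fixpoint Anum (t s r : nat) {struct r} : nat :=
  match r with
  | 0 => 0
  | 1 => t + s + 1
  | r'.+1 => \sum_(1 <= i < t.+1) Anum (t - i) s r'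
             + \sum_(1 <= i < s.+1) Anum t (s - i) r'
             + Anum t s r'
  end.

Definition has_card (T : eqType) (X : T -> bool) (n : nat) : Prop :=
  exists l : seq T, [/\ uniq l, forall x, (x \in l) = X x & size l = n].

From mathcomp Require Import all_boot zify.

(* Sort the vectors v of A_{t,s}(u) by their first coordinate v_1 = u_1 - s + k
   with 0 <= k <= s + t: this coordinate uses up s - k of the budget s for
   decreases or k - s of the budget t for increases, and the remaining
   coordinates form a set A_{t',s'}(u_2, ..., u_r) for the leftover budgets.
   Since every u_i exceeds s, no coordinate can drop below 1, so positivity
   is automatic and the number of vectors depends only on r, t and s.  Summing
   over k, the values k < s, k = s and k > s give the three terms of the
   recursion defining A_{t,s}(r). *)

Definition deficit (u v : seq nat) : nat := sumn [seq x.1 - x.2 | x <- zip u v].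

Lemma deficit_cons x y u v : deficit (x :: u) (y :: v) = x - y + deficit u v.
Proof. by []. Qed.

Lemma deficit_tnth r (u v : r.-tuple nat) :
  \sum_(i < r) (tnth u i - tnth v i) = deficit u v.
Proof.
rewrite /deficit sumnE big_map (big_nth (0, 0)) big_mkord size_zip !size_tuple minnn.
by apply: eq_bigr => i _; rewrite nth_zip ?size_tuple // !(tnth_nth 0).
Qed.

(* With truncated subtraction, at most one of [k - s] and [s - k] is nonzero. *)
Fixpoint enumA (t s : nat) (u : seq nat) : seq (seq nat) :=
  if u is x :: u' then
    [seq (x - s + k) :: w | k <- iota 0 (s + t + 1),
                            w <- enumA (t - (k - s)) (s - (s - k)) u']
  else [:: [::]].

Lemma uniq_enumA t s u : uniq (enumA t s u).
Proof.
elim: u t s => [|x u IHu] t s //=.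
apply: allpairs_uniq_dep => [||[k1 w1] [k2 w2] _ _ /= [ek ->]].
- exact: iota_uniq.
- by move=> k _; apply: IHu.
- by have -> : k1 = k2 by lia.
Qed.

Lemma mem_enumA t s u w : all (fun x => s < x) u ->
  (w \in enumA t s u) =
  [&& size w == size u, all (fun y => 0 < y) w, deficit u w <= s & deficit w u <= t].
Proof.
elim: u t s w => [|x u IHu] t s [|y w] //= /andP[s_lt_x u_gt_s].
  by apply/allpairsPdep => -[k [? [_ _ //]]].
have u_gt_s' k : all (fun x => s - (s - k) < x) u.
  by apply: sub_all u_gt_s => z /=; lia.
rewrite eqSS !deficit_cons; apply/allpairsPdep/idP => [[k [w' []]]|].
- rewrite mem_iota IHu // => /andP[_ k_lt] /and4P[size_w' w'_gt0 ? ?] [-> ->] /=.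
  rewrite size_w' w'_gt0 /=; lia.
- case/and4P=> size_w /andP[y_gt0 w_gt0] def_le exc_le.
  exists (y - (x - s)), w; rewrite mem_iota IHu // size_w w_gt0 /=.
  split; [lia | lia | congr (_ :: _); lia].
Qed.

Lemma sum_excess_deficit (f : nat -> nat -> nat) t s :
  \sum_(0 <= k < s + t + 1) f (t - (k - s)) (s - (s - k)) =
  \sum_(1 <= i < t.+1) f (t - i) s + \sum_(1 <= i < s.+1) f t (s - i) + f t s.
Proof.
have s_lt : s < s + t + 1 by lia.
rewrite (big_cat_nat (n := s)) ?(ltnW s_lt) // (big_ltn s_lt).
rewrite (big_addn 0 _ s.+1) [\sum_(0 <= k < s) _]big_nat_rev !big_add1 /=.
have -> : s + t + 1 - s.+1 = t by lia.
rewrite subnn !subn0 addnA addnC addnA; congr (_ + _ + _).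
all: by apply: eq_big_nat => i /andP[_ ?]; congr f; lia.
Qed.

Lemma size_enumA t s u : u != [::] -> size (enumA t s u) = Anum t s (size u).
Proof.
elim: u t s => [|x u IHu] t s // _.
rewrite [enumA _ _ _]/= size_allpairs_dep sumnE big_map.
have [-> | u_nil] := eqVneq u [::].
  by rewrite sum1_size size_iota /= (addnC s).
under eq_bigr do rewrite IHu //.
rewrite -[X in iota 0 X]subn0 (sum_excess_deficit (fun t' s' => Anum t' s' (size u))).
rewrite -size_eq0 in u_nil; change (size (x :: u)) with (size u).+1.
by case: (size u) u_nil.
Qed.

Lemma has_card_tuple (T : eqType) r (P : pred (r.-tuple T)) (l : seq (seq T)) :
  uniq l -> {in l, forall w, size w = r} ->
  (forall v : r.-tuple T, (val v \in l) = P v) -> has_card P (size l).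
Proof.
move=> l_uniq size_l mem_l; exists (pmap insub l); split.
- exact: pmap_sub_uniq.
- by move=> v; rewrite mem_pmap_sub.
- rewrite size_pmap_sub -[RHS]count_predT; apply: eq_in_count => w /size_l ->.
  exact: eqxx.
Qed.

Theorem lemma2 (r t s : nat) (u : r.-tuple nat) :
  1 <= r -> posvec u -> (forall i : 'I_r, s.+1 <= tnth u i) ->
  has_card (inA t s u) (Anum t s r).
Proof.
move=> r_gt0 _ u_gt_s.
have all_u_gt_s : all (fun x => s < x) u by apply/allP => x /tnthP[i ->].
have u_nil : (u : seq nat) != [::] by rewrite -size_eq0 size_tuple -lt0n.
have <- : size (enumA t s u) = Anum t s r by rewrite size_enumA // size_tuple.
apply: has_card_tuple.
- exact: uniq_enumA.
- by move=> w; rewrite mem_enumA // size_tuple => /andP[/eqP].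
- by move=> v /=; rewrite mem_enumA // /inA /posvec !deficit_tnth !size_tuple eqxx.
Qed.
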